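(* Assume the Setup below and $|n-p-1|>1$. Let $m=\min(p,n-1)$ and let $\sigma_1\ge\dots\ge\sigma_m>0$ be the nonzero singular values of $\Sigma^{-1/2}(X-\bar X)$ (which are almost surely positive). Then, almost surely: (1) for either choice $\hat\alpha=c$ (with $c_0=0$) or $\hat\alpha=c\,\mathrm{tr}(W)$ (with $c_0=c$), $\hat a_S\to|n-p-1|-1$ as $c\to0$; (2) as $c\to\infty$, for each $i=1,\dots,m$, $$\frac{\hat a_S}{\sigma_i^2+\hat\alpha}\to\begin{cases}(n-1)p/\mathrm{tr}(W) & \text{if }\hat\alpha=c,\\ \{(n-1)p-2\}/\mathrm{tr}(W) & \text{if }\hat\alpha=c\,\mathrm{tr}(W).\end{cases}$$
   Context: Setup. Let $n\ge 2$, $p\ge1$. Let $X=(x_1,\dots,x_n)$ be a random $p\times n$ matrix whose columns are independent with $x_i\sim\mathcal N_p(\theta_i,\Sigma)$, where $\Sigma$ is a known $p\times p$ positive definite matrix and $\Theta=(\theta_1,\dots,\theta_n)\in\mathbb R^{p\times n}$. Let $\bar x=n^{-1}\sum_{j=1}^n x_j$, $\bar X=\bar x\,1_n^\top$ with $1_n=(1,\dots,1)^\top$, and $W=(X-\bar X)(X-\bar X)^\top\Sigma^{-1}$. The ridge statistic is $\hat\alpha=c$ or $\hat\alpha=c\,\mathrm{tr}(W)$ with a constant $c>0$; correspondingly $c_0=0$ or $c_0=c$. Put $V=(W+\hat\alpha I_p)^{-1}$ and define the estimated weight $$\hat a_S=\frac{(n-p-1)\mathrm{tr}(V)+\hat\alpha(\mathrm{tr}V)^2}{\mathrm{tr}(V^2W)}-(2c_0+1).$$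 *)

From HB Require Import structures.
From mathcomp Require Import all_boot all_order all_algebra.
Set Implicit Arguments. Unset Strict Implicit. Unset Printing Implicit Defensive.
Import Order.TTheory GRing.Theory Num.Theory.
Local Open Scope ring_scope.

Section Defs.
Variable R : realFieldType.

Definition posdef (p : nat) (M : 'M[R]_p) : Prop :=
  forall v : 'rV[R]_p, v != 0 -> 0 < (v *m M *m v^T) 0 0.

Definition Xbar (p n : nat) (X : 'M[R]_(p, n)) : 'M[R]_(p, n) :=
  \matrix_(i < p, j < n) (n%:R^-1 * \sum_(k < n) X i k).

Definition Wmat (p n : nat) (Sigma : 'M[R]_p) (X : 'M[R]_(p, n)) : 'M[R]_p :=
  (X - Xbar X) *m (X - Xbar X)^T *m invmx Sigma.

Definition Vmat (p : nat) (W : 'M[R]_p) (alpha : R) : 'M[R]_p :=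
  invmx (W + alpha%:M).

Definition aS (n p : nat) (W : 'M[R]_p) (alpha c0 : R) : R :=
  let V := Vmat W alpha in
  ((n%:R - p%:R - 1) * \tr V + alpha * (\tr V) ^+ 2) / \tr (V *m V *m W)
  - (2 * c0 + 1).

Definition lim_at0 (f : R -> R) (l : R) : Prop :=
  forall e : R, 0 < e -> exists2 d : R, 0 < d &
    forall c : R, 0 < c -> c < d -> `|f c - l| < e.

Definition lim_at_infty (f : R -> R) (l : R) : Prop :=
  forall e : R, 0 < e -> exists M : R,
    forall c : R, M < c -> `|f c - l| < e.

(* sigma_1,...,sigma_m (m <= min p n) occupy the diagonal of a singular value
   decomposition A = U D V^T (U, V orthogonal), all other entries of D zero. *)
Definition svd_diag (p n m : nat) (sigma : 'I_m -> R) : 'M[R]_(p, n) :=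
  \matrix_(i < p, j < n)
     \sum_(k < m) (if ((i : nat) == k) && ((j : nat) == k) then sigma k else 0).

Definition are_singular_values (p n m : nat) (A : 'M[R]_(p, n))
    (sigma : 'I_m -> R) : Prop :=
  exists U : 'M[R]_p, exists V : 'M[R]_n,
    [/\ U *m U^T = 1%:M, V *m V^T = 1%:M & A = U *m svd_diag p n sigma *m V^T].

End Defs.

(* Whitening gives W = P diag(lam) P^-1 with lam_k = sigma_k^2 for k < m and
   lam_k = 0 for the remaining z = p - m indices, so that
   tr V = sum_k 1/(lam_k + a) and tr(V^2 W) = sum_k lam_k/(lam_k + a)^2.
   As a -> 0, tr V blows up like z/a; because z = 0 when p < n and
   z = -(n - p - 1) otherwise, the singular term z (n - p - 1 + z)/a of the
   numerator vanishes identically, and the remaining continuous expression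
   tends to n - p - 1 + 2z - 1 = |n - p - 1| - 1.  As a -> oo, the substitution
   u = 1/a turns a_S/(sigma_i^2 + a) into a rational function of u that is
   continuous at u = 0, where tr V ~ p u and tr(V^2 W) ~ tr(W) u^2. *)

From mathcomp Require Import all_boot all_order all_algebra.
From mathcomp Require Import topology normedtype.
From mathcomp Require Import ring lra.
Import Order.TTheory GRing.Theory Num.Theory numFieldNormedType.Exports.
Set Implicit Arguments. Unset Strict Implicit.
Local Open Scope classical_set_scope.
Local Open Scope ring_scope.

Section LimitsFromContinuity.
Variable R : realFieldType.

Lemma lim_at0_cvg (f g : R -> R) l :
  (forall c, 0 < c -> f c = g c) -> g c @[c --> 0] --> l -> lim_at0 f l.
Proof.
move=> fg /cvgrPdist_lt gl e e_gt0; have /nbhs_ballP[d /= d_gt0 gd] := gl e e_gt0.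
exists d => // c c_gt0 c_lt_d; rewrite fg // distrC; apply: gd.
by rewrite /ball /= sub0r normrN gtr0_norm.
Qed.

Lemma lim_at_infty_cvgV (f g : R -> R) l T : 0 < T ->
  (forall c, 0 < c -> f c = g (c * T)^-1) -> g u @[u --> 0] --> l ->
  lim_at_infty f l.
Proof.
move=> T_gt0 fg /cvgrPdist_lt gl e e_gt0; have /nbhs_ballP[d /= d_gt0 gd] := gl e e_gt0.
exists (d * T)^-1 => c c_gt.
have c_gt0 : 0 < c by apply: lt_trans c_gt; rewrite invr_gt0 mulr_gt0.
rewrite fg // distrC; apply: gd.
rewrite /ball /= sub0r normrN gtr0_norm ?invr_gt0 ?mulr_gt0 //.
by rewrite -[d]invrK ltf_pV2 ?posrE ?invr_gt0 ?mulr_gt0 // -ltr_pdivrMr // -invfM.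
Qed.

End LimitsFromContinuity.

Lemma psumr_gt0 (R : numDomainType) (I : finType) (i : I) (F : I -> R) :
  (forall j, 0 <= F j) -> 0 < F i -> 0 < \sum_j F j.
Proof.
by move=> F_ge0 Fi_gt0; rewrite (bigD1 i) //= ltr_pwDl // sumr_ge0.
Qed.

Section Resolvent.
Variables (R : realFieldType) (p : nat) (lam : 'I_p -> R).
Hypothesis lam_ge0 : forall k, 0 <= lam k.
Variable k0 : 'I_p.
Hypothesis lam_k0_gt0 : 0 < lam k0.

(* tr V and tr (V^2 W) when W has eigenvalues [lam] and the ridge is [a]. *)
Definition tr_res a := \sum_k (lam k + a)^-1.
Definition tr_res2W a := \sum_k lam k / (lam k + a) ^+ 2.
Definition aS_spec (N a c0 : R) :=
  (N * tr_res a + a * tr_res a ^+ 2) / tr_res2W a - (2 * c0 + 1).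

Definition nzero : R := \sum_(k | lam k == 0) 1.
Definition tr_res_nz a := \sum_(k | lam k != 0) (lam k + a)^-1.
Definition sum_inv_nz := \sum_(k | lam k != 0) (lam k)^-1.
Definition aS_reg (N a c0 : R) :=
  ((N + 2 * nzero) * tr_res_nz a + a * tr_res_nz a ^+ 2) / tr_res2W a - (2 * c0 + 1).

Definition tr_res_inv u := \sum_k (1 + lam k * u)^-1.
Definition tr_res2W_inv u := \sum_k lam k / (1 + lam k * u) ^+ 2.
(* [aS_spec (c * T) (kappa * c) / (q + c * T)] in the variable u = 1/(c T);
   T = 1, kappa = 0 is the ridge c and T = tr W, kappa = 1 the ridge c tr W. *)
Definition aS_inv (N q kappa T u : R) :=
  ((N * tr_res_inv u + tr_res_inv u ^+ 2) / tr_res2W_inv u - 2 * kappa / T - u)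
  / (q * u + 1).

Lemma lam_add_gt0 k a : 0 < a -> 0 < lam k + a.
Proof. by move=> a_gt0; have := lam_ge0 k; lra. Qed.

Lemma one_add_lam_gt0 k u : 0 <= u -> 0 < 1 + lam k * u.
Proof. by move=> u_ge0; have := mulr_ge0 (lam_ge0 k) u_ge0; lra. Qed.

Lemma tr_res_split a : 0 < a -> tr_res a = tr_res_nz a + nzero / a.
Proof.
move=> a_gt0; rewrite /tr_res (bigID (fun k => lam k == 0)) /= addrC.
by rewrite /nzero mulr_suml; congr (_ + _); apply: eq_bigr => k /eqP ->; rewrite add0r div1r.
Qed.

Lemma tr_res2W_nz a : tr_res2W a = \sum_(k | lam k != 0) lam k / (lam k + a) ^+ 2.
Proof.
rewrite /tr_res2W (bigID (fun k => lam k == 0)) /= big1 ?add0r //.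
by move=> k /eqP ->; rewrite mul0r.
Qed.

Lemma sum_inv_nz_gt0 : 0 < sum_inv_nz.
Proof.
rewrite /sum_inv_nz big_mkcond /=; apply: (psumr_gt0 (i := k0)) => [k|].
  by case: ifP => // _; rewrite invr_ge0.
by rewrite gt_eqF // invr_gt0.
Qed.

Lemma aS_spec_reg N a c0 : nzero * (N + nzero) = 0 -> 0 < a ->
  aS_spec N a c0 = aS_reg N a c0.
Proof.
move=> z_eq a_gt0; rewrite /aS_spec /aS_reg tr_res_split //.
congr (_ / _ - _).
have a_neq0 : a != 0 by rewrite gt_eqF.
have -> : N * (tr_res_nz a + nzero / a) + a * (tr_res_nz a + nzero / a) ^+ 2
   = (N + 2 * nzero) * tr_res_nz a + a * tr_res_nz a ^+ 2 + nzero * (N + nzero) / a.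
  by field.
by rewrite z_eq mul0r addr0.
Qed.

Lemma cvg_tr_res_nz : tr_res_nz a @[a --> 0] --> sum_inv_nz.
Proof.
apply: cvg_big => [|k k_neq0]; first exact: add_continuous.
apply: cvgV => //; rewrite -[X in _ --> X]addr0.
exact: cvgD (cvg_cst _) cvg_id.
Qed.

Lemma cvg_tr_res2W : tr_res2W a @[a --> 0] --> sum_inv_nz.
Proof.
rewrite (eq_cvg _ _ tr_res2W_nz).
apply: cvg_big => [|k k_neq0]; first exact: add_continuous.
have -> : (lam k)^-1 = lam k / (lam k + 0) ^+ 2 by rewrite addr0; field.
apply: cvgM (cvg_cst _) _; apply: cvgV; first by rewrite addr0 expf_neq0.
by rewrite expr2; apply: cvgM; exact: cvgD (cvg_cst _) cvg_id.
Qed.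

Lemma cvg_aS_reg N (g c0 : R -> R) :
  g c @[c --> 0] --> 0 -> c0 c @[c --> 0] --> 0 ->
  aS_reg N (g c) (c0 c) @[c --> 0] --> N + 2 * nzero - 1.
Proof.
move=> g0 c00; have S_neq0 := lt0r_neq0 sum_inv_nz_gt0.
have tg := cvg_comp _ _ g0 cvg_tr_res_nz.
have t2g := cvg_comp _ _ g0 cvg_tr_res2W.
suff -> : N + 2 * nzero - 1 = ((N + 2 * nzero) * sum_inv_nz + 0 * sum_inv_nz ^+ 2)
    / sum_inv_nz - (2 * 0 + 1).
  apply: cvgB; last exact: cvgD (cvgM (cvg_cst _) c00) (cvg_cst _).
  apply: cvgM; last exact: cvgV S_neq0 t2g.
  apply: cvgD; first exact: cvgM (cvg_cst _) tg.
  apply: cvgM; first exact: g0.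
  by rewrite expr2; exact: (cvgM tg tg).
by field.
Qed.

Lemma lam_add_invE k a : 0 < a -> (lam k + a)^-1 = a^-1 * (1 + lam k * a^-1)^-1.
Proof.
move=> a_gt0; have a_neq0 := lt0r_neq0 a_gt0.
by rewrite -invfM mulrDr mulr1 mulrCA divff // mulr1 addrC.
Qed.

Lemma tr_res_invE a : 0 < a -> tr_res a = a^-1 * tr_res_inv a^-1.
Proof.
move=> a_gt0; rewrite /tr_res /tr_res_inv mulr_sumr.
by apply: eq_bigr => k _; rewrite lam_add_invE.
Qed.

Lemma tr_res2W_invE a : 0 < a -> tr_res2W a = a^-1 ^+ 2 * tr_res2W_inv a^-1.
Proof.
move=> a_gt0; rewrite /tr_res2W /tr_res2W_inv mulr_sumr.
by apply: eq_bigr => k _; rewrite -exprVn lam_add_invE // exprMn mulrCA !exprVn.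
Qed.

Lemma tr_res2W_inv_gt0 u : 0 <= u -> 0 < tr_res2W_inv u.
Proof.
move=> u_ge0; apply: (psumr_gt0 (i := k0)) => [k|].
  by rewrite divr_ge0 ?exprn_ge0 // ltW // one_add_lam_gt0.
by rewrite divr_gt0 ?exprn_gt0 // one_add_lam_gt0.
Qed.

Lemma aS_spec_div_inv N q kappa T c : 0 <= q -> 0 < T -> 0 < c ->
  aS_spec N (c * T) (kappa * c) / (q + c * T) = aS_inv N q kappa T (c * T)^-1.
Proof.
move=> q_ge0 T_gt0 c_gt0; have a_gt0 : 0 < c * T by rewrite mulr_gt0.
have u_ge0 : 0 <= (c * T)^-1 by rewrite invr_ge0 ltW.
rewrite /aS_spec /aS_inv tr_res_invE // tr_res2W_invE //.
have qa_neq0 : q + c * T != 0 by apply: lt0r_neq0; lra.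
by field; rewrite qa_neq0 !lt0r_neq0 // tr_res2W_inv_gt0.
Qed.

Lemma cvg_tr_res_inv : tr_res_inv u @[u --> 0] --> (p%:R : R).
Proof.
have -> : p%:R = \sum_(k < p) (1 + lam k * 0)^-1 :> R.
  by under eq_bigr do rewrite mulr0 addr0 invr1; rewrite sumr_const card_ord.
apply: cvg_big => [|k _]; first exact: add_continuous.
apply: cvgV; first by rewrite mulr0 addr0 oner_neq0.
exact: cvgD (cvg_cst _) (cvgM (cvg_cst _) cvg_id).
Qed.

Lemma cvg_tr_res2W_inv : tr_res2W_inv u @[u --> 0] --> \sum_k lam k.
Proof.
apply: cvg_big => [|k _]; first exact: add_continuous.
have h1 : 1 + lam k * u @[u --> 0] --> 1 + lam k * 0.
  exact: cvgD (cvg_cst _) (cvgM (cvg_cst _) cvg_id).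
have : lam k / (1 + lam k * u) ^+ 2 @[u --> 0] --> lam k / (1 + lam k * 0) ^+ 2.
  apply: cvgM (cvg_cst _) _; apply: cvgV; first by rewrite mulr0 addr0 expr1n oner_neq0.
  by rewrite expr2; exact: (cvgM h1 h1).
by rewrite mulr0 addr0 expr1n divr1.
Qed.

Lemma cvg_aS_inv N q kappa T : 0 < T ->
  aS_inv N q kappa T u @[u --> 0] --> (N + p%:R) * p%:R / \sum_k lam k - 2 * kappa / T.
Proof.
move=> T_gt0; have S_neq0 := lt0r_neq0 (psumr_gt0 lam_ge0 lam_k0_gt0).
have A := cvg_tr_res_inv.
suff -> : (N + p%:R) * p%:R / \sum_k lam k - 2 * kappa / T
  = ((N * p%:R + p%:R ^+ 2) / \sum_k lam k - 2 * kappa / T - 0) / (q * 0 + 1).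
  apply: cvgM; last first.
    apply: cvgV; first by rewrite mulr0 add0r oner_neq0.
    exact: cvgD (cvgM (cvg_cst _) cvg_id) (cvg_cst _).
  apply: cvgB cvg_id; apply: cvgB (cvg_cst _).
  apply: cvgM; last exact: cvgV S_neq0 cvg_tr_res2W_inv.
  by apply: cvgD (cvgM (cvg_cst _) A) _; rewrite expr2; exact: (cvgM A A).
by rewrite mulr0 add0r invr1 mulr1 subr0 expr2 mulrDl.
Qed.

End Resolvent.

Lemma invmx_right (R : comUnitRingType) p (M N : 'M[R]_p) :
  M *m N = 1%:M -> invmx M = N.
Proof.
move=> MN; have [M_unit _] := mulmx1_unit MN.
by rewrite -[RHS](mulKmx M_unit) MN mulmx1.
Qed.

Section Conjugation.
Variables (R : fieldType) (p : nat) (P Q : 'M[R]_p).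
Hypothesis PQ : P *m Q = 1%:M.

Let QP : Q *m P = 1%:M := mulmx1C PQ.

Lemma mxtrace_conj (A : 'M[R]_p) : \tr (P *m A *m Q) = \tr A.
Proof. by rewrite mxtrace_mulC mulmxA QP mul1mx. Qed.

Lemma conj_diag_mul (d e : 'I_p -> R) :
  P *m diag_mx (\row_k d k) *m Q *m (P *m diag_mx (\row_k e k) *m Q)
  = P *m diag_mx (\row_k (d k * e k)) *m Q.
Proof.
rewrite !mulmxA -[P *m _ *m Q *m P]mulmxA QP mulmx1 -[P *m _ *m diag_mx _]mulmxA.
by rewrite mulmx_diag; congr (_ *m diag_mx _ *m _); apply/rowP => k; rewrite !mxE.
Qed.

Lemma conj_diag_addr (d : 'I_p -> R) a :
  P *m diag_mx (\row_k d k) *m Q + a%:M = P *m diag_mx (\row_k (d k + a)) *m Q.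
Proof.
have -> : \row_k (d k + a) = \row_k d k + const_mx a.
  by apply/rowP => k; rewrite !mxE.
by rewrite raddfD /= diag_const_mx mulmxDr mulmxDl mul_mx_scalar -scalemxAl PQ scalemx1.
Qed.

Lemma invmx_conj_diag (d : 'I_p -> R) : (forall k, d k != 0) ->
  invmx (P *m diag_mx (\row_k d k) *m Q) = P *m diag_mx (\row_k (d k)^-1) *m Q.
Proof.
move=> d_neq0; apply: invmx_right; rewrite conj_diag_mul -PQ.
have -> : \row_k (d k * (d k)^-1) = const_mx 1 by apply/rowP => k; rewrite !mxE divff.
by rewrite diag_const_mx mulmx1 PQ.
Qed.

End Conjugation.

Lemma aS_conj_diag (R : realFieldType) n p (P Q : 'M[R]_p) (lam : 'I_p -> R) a c0 :
  P *m Q = 1%:M -> (forall k, 0 <= lam k) -> 0 < a ->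
  aS n (P *m diag_mx (\row_k lam k) *m Q) a c0 = aS_spec lam (n%:R - p%:R - 1) a c0.
Proof.
move=> PQ lam_ge0 a_gt0.
have VE : Vmat (P *m diag_mx (\row_k lam k) *m Q) a
    = P *m diag_mx (\row_k (lam k + a)^-1) *m Q.
  by rewrite /Vmat conj_diag_addr // invmx_conj_diag // => k; rewrite gt_eqF ?lam_add_gt0.
rewrite /aS /= VE !conj_diag_mul // !mxtrace_conj // !mxtrace_diag.
by congr ((_ * _ + _ * _ ^+ 2) / _ - _); apply: eq_bigr => k _;
  rewrite !mxE // mulrC expr2 invfM mulrA.
Qed.

Section SingularValues.
Variable R : realFieldType.

Definition svd_coef m (s : 'I_m -> R) (k : nat) : R :=
  \sum_(l < m) (if k == l then s l else 0).

Lemma svd_coef_ord m (s : 'I_m -> R) (l : 'I_m) : svd_coef s l = s l.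
Proof.
rewrite /svd_coef (bigD1 l) //= eqxx big1 ?addr0 // => l' l'_neq.
by case: eqP => // /val_inj E; rewrite E eqxx in l'_neq.
Qed.

Lemma svd_coef_out m (s : 'I_m -> R) k : (m <= k)%N -> svd_coef s k = 0.
Proof.
move=> mk; apply: big1 => l _; case: eqP => // kl.
by have := ltn_ord l; rewrite -kl ltnNge mk.
Qed.

Lemma svd_coef_sqr_eq0 m (s : 'I_m -> R) k : (forall l, 0 < s l) ->
  (svd_coef s k ^+ 2 == 0) = (m <= k)%N.
Proof.
move=> s_gt0; rewrite sqrf_eq0; case: ltnP => [k_lt_m | m_le_k].
  by rewrite -[k]/(Ordinal k_lt_m : nat) svd_coef_ord gt_eqF.
by rewrite svd_coef_out ?eqxx.
Qed.

Lemma svd_diagE p n m (s : 'I_m -> R) i j :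
  svd_diag p n s i j = if (i : nat) == j then svd_coef s i else 0.
Proof.
rewrite mxE /svd_coef; case: eqP => [-> | ij_neq].
  by apply: eq_bigr => l _; rewrite andbb.
apply: big1 => l _; case: eqP => // il; case: eqP => // jl.
by case: ij_neq; rewrite il jl.
Qed.

Lemma svd_diag_mulmxT p n m (s : 'I_m -> R) : (m <= n)%N ->
  svd_diag p n s *m (svd_diag p n s)^T = diag_mx (\row_k svd_coef s k ^+ 2).
Proof.
move=> mn; apply/matrixP => i i'; rewrite !mxE.
under eq_bigr => j _ do rewrite svd_diagE [X in _ * X]mxE svd_diagE.
case: (eqVneq i i') => [<- | ii'_neq].
  rewrite mulr1n; case: (ltnP i n) => [i_lt_n | n_le_i].
    rewrite (bigD1 (Ordinal i_lt_n)) //= eqxx -expr2 big1 ?addr0 // => j j_neq.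
    case: eqP => [ij | _]; last by rewrite mulr0.
    by rewrite -(inj_eq val_inj) /= -ij eqxx in j_neq.
  by rewrite svd_coef_out ?(leq_trans mn) // expr0n big1 // => j _; case: ifP; rewrite mul0r.
rewrite mulr0n; apply: big1 => j _.
case: eqP => [ij|]; case: eqP => [i'j|]; rewrite ?mulr0 ?mul0r //.
by case/eqP: ii'_neq; apply: val_inj; rewrite /= ij i'j.
Qed.

Lemma posdef_unitmx p (S : 'M[R]_p) : posdef S -> S \in unitmx.
Proof.
move=> S_pd; rewrite unitmxE unitfE; apply/negP => /det0P [v v_neq0 vS].
by have := S_pd v v_neq0; rewrite vS mul0mx mxE ltxx.
Qed.

(* With A = S (X - Xbar X) = U D V^T we get W = S^-1 A A^T S = (S^-1 U) (D D^T) (U^T S). *)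
Lemma Wmat_conj_diag p n m (Sigma S : 'M[R]_p) (X : 'M[R]_(p, n)) (s : 'I_m -> R) :
  (m <= n)%N -> S^T = S -> posdef S -> S *m S = invmx Sigma ->
  are_singular_values (S *m (X - Xbar X)) s ->
  exists P Q : 'M[R]_p, P *m Q = 1%:M /\
    Wmat Sigma X = P *m diag_mx (\row_k svd_coef s k ^+ 2) *m Q.
Proof.
move=> mn ST S_pd SS [U [V [UU VV AE]]].
have S_unit := posdef_unitmx S_pd.
set B := X - Xbar X in AE *.
exists (invmx S *m U), (U^T *m S); split.
  by rewrite -mulmxA [U *m _]mulmxA UU mul1mx mulVmx.
have BE : B = invmx S *m (U *m svd_diag p n s *m V^T) by rewrite -AE mulKmx.
have BtS : B^T *m S = (U *m svd_diag p n s *m V^T)^T by rewrite -AE trmx_mul ST.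
rewrite /Wmat -/B -SS -(svd_diag_mulmxT p s mn).
rewrite [B *m B^T *m (S *m S)]mulmxA -[B *m B^T *m S]mulmxA BtS {1}BE.
rewrite !trmx_mul !trmxK !mulmxA; congr (_ *m _).
by rewrite -[invmx S *m U *m svd_diag p n s *m V^T *m V]mulmxA (mulmx1C VV) mulmx1.
Qed.

End SingularValues.

Lemma nzero_threshold (R : realFieldType) p m (lam : 'I_p -> R) : (m <= p)%N ->
  (forall k : 'I_p, (lam k == 0) = (m <= k)%N) -> nzero lam = (p - m)%:R.
Proof.
move=> mp lamE; rewrite /nzero (eq_bigl _ _ lamE) /=.
rewrite -(big_mkord (fun k => m <= k)%N (fun _ => 1 : R)).
rewrite (@big_cat_nat _ _ _ m 0 p _ _ (leq0n m) mp) /=.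
rewrite big_nat_cond big1 ?add0r => [|k /andP[/andP[_ k_lt_m]]]; last by rewrite leqNgt k_lt_m.
rewrite big_nat_cond (eq_bigl (fun k => (m <= k < p)%N && true)) => [|k]; last by case: (m <= k)%N.
by rewrite -big_nat_cond sumr_const_nat.
Qed.

Lemma rank_deficiency (R : realDomainType) n p : (0 < n)%N ->
  let N : R := n%:R - p%:R - 1 in let z : R := (p - minn p n.-1)%:R in
  z * (N + z) = 0 /\ `|N| = N + 2 * z.
Proof.
move=> n_gt0 N z; rewrite /z /N; case: (leqP p n.-1) => [p_le | p_gt].
  rewrite subnn mul0r mulr0 addr0; split => //.
  have p_lt_n : (p < n)%N by rewrite -(prednK n_gt0) ltnS.
  have -> : n%:R - p%:R - 1 = (n - p.+1)%:R :> R by rewrite natrB // -addn1 natrD; ring.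
  by rewrite ger0_norm.
rewrite natrB; last exact: ltnW.
have -> : n%:R - p%:R - 1 = - (p%:R - n.-1%:R) :> R.
  by rewrite -[in LHS](prednK n_gt0) -addn1 natrD; ring.
split; first by ring.
by rewrite normrN ger0_norm ?subr_ge0 ?ler_nat 1?ltnW //; ring.
Qed.

Section RidgeLimits.
Variables (R : realFieldType) (n p : nat) (W : 'M[R]_p) (lam : 'I_p -> R).
Hypothesis lam_ge0 : forall k, 0 <= lam k.
Variable k0 : 'I_p.
Hypothesis lam_k0_gt0 : 0 < lam k0.
Hypothesis aSE : forall a c0, 0 < a -> aS n W a c0 = aS_spec lam (n%:R - p%:R - 1) a c0.
Hypothesis trWE : \tr W = \sum_k lam k.

Let trW_gt0 : 0 < \tr W. Proof. by rewrite trWE; apply: psumr_gt0 lam_ge0 lam_k0_gt0. Qed.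

Lemma aS_lim_small_ridge : nzero lam * (n%:R - p%:R - 1 + nzero lam) = 0 ->
  lim_at0 (fun c => aS n W c 0) (n%:R - p%:R - 1 + 2 * nzero lam - 1) /\
  lim_at0 (fun c => aS n W (c * \tr W) c) (n%:R - p%:R - 1 + 2 * nzero lam - 1).
Proof.
move=> z_eq; have scale0 : c * \tr W @[c --> 0] --> 0.
  by rewrite -[X in _ --> X](mul0r (\tr W)); apply: cvgM cvg_id (cvg_cst _).
split.
- apply: (lim_at0_cvg _ (cvg_aS_reg lam_ge0 lam_k0_gt0 cvg_id (cvg_cst 0))).
  by move=> c c_gt0; rewrite aSE // aS_spec_reg.
- apply: (lim_at0_cvg _ (cvg_aS_reg lam_ge0 lam_k0_gt0 scale0 cvg_id)).
  by move=> c c_gt0; rewrite aSE ?mulr_gt0 // aS_spec_reg ?mulr_gt0.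
Qed.

Lemma aS_lim_large_ridge q : 0 <= q ->
  lim_at_infty (fun c => aS n W c 0 / (q + c)) ((n%:R - 1) * p%:R / \tr W) /\
  lim_at_infty (fun c => aS n W (c * \tr W) c / (q + c * \tr W))
    (((n%:R - 1) * p%:R - 2) / \tr W).
Proof.
move=> q_ge0; set N : R := n%:R - p%:R - 1.
have aS_invE c T kappa : 0 < T -> 0 < c ->
    aS n W (c * T) (kappa * c) / (q + c * T) = aS_inv lam N q kappa T (c * T)^-1.
  by move=> T_gt0 c_gt0; rewrite aSE ?mulr_gt0 // (aS_spec_div_inv lam_ge0 lam_k0_gt0).
split.
- have -> : (n%:R - 1) * p%:R / \tr W = (N + p%:R) * p%:R / \sum_k lam k - 2 * 0 / 1.
    by rewrite trWE mulr0 mul0r subr0 /N; congr (_ * _ / _); ring.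
  apply: (lim_at_infty_cvgV ltr01 _ (cvg_aS_inv lam_ge0 lam_k0_gt0 q ltr01)).
  by move=> c c_gt0; rewrite -aS_invE // mulr1 mul0r.
- have -> : ((n%:R - 1) * p%:R - 2) / \tr W
      = (N + p%:R) * p%:R / \sum_k lam k - 2 * 1 / \tr W.
    by rewrite -trWE /N; field; rewrite gt_eqF.
  apply: (lim_at_infty_cvgV trW_gt0 _ (cvg_aS_inv lam_ge0 lam_k0_gt0 q trW_gt0)).
  by move=> c c_gt0; rewrite -aS_invE // mul1r.
Qed.

End RidgeLimits.

Unset Implicit Arguments.
Theorem proposition3 (R : realFieldType) (n p : nat)
    (Sigma Shalf : 'M[R]_p) (X : 'M[R]_(p, n))
    (sigma : 'I_(minn p n.-1) -> R) :
  (2 <= n)%N -> (1 <= p)%N ->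
  Sigma^T = Sigma -> posdef Sigma ->
  Shalf^T = Shalf -> posdef Shalf -> Shalf *m Shalf = invmx Sigma ->
  1 < `|n%:R - p%:R - 1 : R| ->
  (forall i, 0 < sigma i) ->
  (forall i j : 'I_(minn p n.-1), (i <= j)%N -> sigma j <= sigma i) ->
  are_singular_values (Shalf *m (X - Xbar X)) sigma ->
  let W := Wmat Sigma X in
  [/\ lim_at0 (fun c => aS n W c 0) (`|n%:R - p%:R - 1| - 1),
      lim_at0 (fun c => aS n W (c * \tr W) c) (`|n%:R - p%:R - 1| - 1),
      (forall i, lim_at_infty (fun c => aS n W c 0 / (sigma i ^+ 2 + c))
                   ((n%:R - 1) * p%:R / \tr W))
    & (forall i, lim_at_infty
                   (fun c => aS n W (c * \tr W) c / (sigma i ^+ 2 + c * \tr W))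
                   (((n%:R - 1) * p%:R - 2) / \tr W))].
Proof.
move=> n_ge2 p_gt0 _ _ Shalf_sym Shalf_pd Shalf_sq _ sigma_gt0 _ sv W.
have n_gt0 : (0 < n)%N by apply: ltnW.
have [P [Q [PQ WE]]] := Wmat_conj_diag (leq_trans (geq_minr _ _) (leq_pred n))
  Shalf_sym Shalf_pd Shalf_sq sv.
pose lam k := svd_coef sigma (k : 'I_p) ^+ 2.
have lam_ge0 k : 0 <= lam k by apply: sqr_ge0.
have lam_eq0 k : (lam k == 0) = (minn p n.-1 <= k)%N by apply: svd_coef_sqr_eq0.
have lam0_gt0 : 0 < lam (Ordinal p_gt0).
  by rewrite lt0r lam_eq0 lam_ge0 andbT -ltnNge leq_min p_gt0 -ltnS prednK.
have aSE a c0 : 0 < a -> aS n W a c0 = aS_spec lam (n%:R - p%:R - 1) a c0.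
  by move=> a_gt0; rewrite /W WE aS_conj_diag.
have trWE : \tr W = \sum_k lam k.
  by rewrite /W WE mxtrace_conj // mxtrace_diag; apply: eq_bigr => k _; rewrite mxE.
have [z_eq abs_eq] := rank_deficiency R p n_gt0.
rewrite -(nzero_threshold (geq_minl _ _) lam_eq0) in z_eq abs_eq.
have [lim_c lim_ctrW] := aS_lim_small_ridge lam_ge0 lam0_gt0 aSE trWE z_eq.
rewrite abs_eq; split=> // i;
  by have [] := aS_lim_large_ridge lam_ge0 lam0_gt0 aSE trWE (sqr_ge0 (sigma i)).
Qed.
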